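(* Assume $r(\boldsymbol\gamma)\le1<2+\alpha\le R(\boldsymbol\gamma)$. Let $(\mathbf A^\dagger,\mathbf q^\dagger)$ maximize $\Omega$, let $(\mathbf A^\ddagger,\mathbf q^\ddagger)$ maximize $\Pi$ (both over $\mathcal A\times\mathbb R^n_{\ge0}$), and let $(\mathbf A^{\rm d},\mathbf q^{\rm d})$ be an equilibrium with $\mathbf A^{\rm d}\mathbf q^{\rm d}=\boldsymbol\beta$ and $\mathbf q^{\rm d}=\boldsymbol\gamma/(2+\alpha)$. Then $$\bar s_{\boldsymbol\gamma}(\mathbf A^\dagger)=\bar s_{\boldsymbol\gamma}(\mathbf A^\ddagger)=\frac{1-\|\boldsymbol\gamma\|_2^2}{n(n-1)}<\frac{(2+\alpha)^2-\|\boldsymbol\gamma\|_2^2}{n(n-1)}=\bar s_{\boldsymbol\gamma}(\mathbf A^{\rm d}).$$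
   Context: Model: integers $n\ge2$, $m\ge2$; $\alpha>0$, $\boldsymbol\beta\in\mathbb R^m$ with $\|\boldsymbol\beta\|_2=1$, $\boldsymbol\gamma\in\mathbb R^n$ with all $\gamma_i>0$. $\mathcal A$ is the set of real $m\times n$ matrices $\mathbf A=[\mathbf a_1,\dots,\mathbf a_n]$ with all $\|\mathbf a_i\|_2=1$. With $\mathbf x=\mathbf A\mathbf q$: $\Omega(\mathbf A,\mathbf q)=\alpha(\mathbf x^\top\boldsymbol\beta-\tfrac12\mathbf x^\top\mathbf x)+\mathbf q^\top\boldsymbol\gamma-\tfrac12\mathbf q^\top\mathbf q$, $\Pi(\mathbf A,\mathbf q)=\alpha(\mathbf x^\top\boldsymbol\beta-\mathbf x^\top\mathbf x)+\mathbf q^\top\boldsymbol\gamma-\mathbf q^\top\mathbf q$. Oligopoly: firm $i$ chooses unit $\mathbf a_i$ and $q_i\ge0$ to maximize $\Pi_i=\alpha q_i\mathbf a_i^\top(\boldsymbol\beta-\sum_{j\ne i}q_j\mathbf a_j)-(1+\alpha)q_i^2+\gamma_iq_i$ given others; an equilibrium is a profile of mutual best responses. $R(\mathbf v)=\|\mathbf v\|_1$, $r(\mathbf v)=2\|\mathbf v\|_\infty-\|\mathbf v\|_1$. Weighted average cosine similarity: $\bar s_{\boldsymbol\gamma}(\mathbf A)=\binom n2^{-1}\sum_{1\le i<j\le n}\gamma_i\gamma_j\mathbf a_i^\top\mathbf a_j$. *)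

(* R : realFieldType, vectors as column vectors 'cV[R]_k,
   the firms' directions as the columns of A : 'M[R]_(m, n). *)
From HB Require Import structures.
From mathcomp Require Import all_boot all_order all_algebra.
Set Implicit Arguments. Unset Strict Implicit. Unset Printing Implicit Defensive.
Import Order.TTheory GRing.Theory Num.Theory.
Local Open Scope ring_scope.

Section Defs.
Variable R : realFieldType.

Definition dotc (k : nat) (u v : 'cV[R]_k) : R := \sum_(i < k) u i 0 * v i 0.

Definition norm2sq (k : nat) (v : 'cV[R]_k) : R := dotc v v.

Definition norm1 (k : nat) (v : 'cV[R]_k) : R := \sum_(i < k) `|v i 0|.
Definition norminf (k : nat) (v : 'cV[R]_k) : R := \big[Num.max/0]_(i < k) `|v i 0|.

Definition Rg (k : nat) (v : 'cV[R]_k) : R := norm1 v.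
Definition rg (k : nat) (v : 'cV[R]_k) : R := 2 * norminf v - norm1 v.

Definition unit_cols (m n : nat) (A : 'M[R]_(m, n)) : Prop :=
  forall j : 'I_n, norm2sq (col j A) = 1.

Definition nonneg (n : nat) (q : 'cV[R]_n) : Prop := forall j : 'I_n, 0 <= q j 0.

Definition Omega (m n : nat) (alpha : R) (beta : 'cV[R]_m) (gamma : 'cV[R]_n)
    (A : 'M[R]_(m, n)) (q : 'cV[R]_n) : R :=
  let x := A *m q in
  alpha * (dotc x beta - 2^-1 * dotc x x) + dotc q gamma - 2^-1 * dotc q q.

Definition Pi (m n : nat) (alpha : R) (beta : 'cV[R]_m) (gamma : 'cV[R]_n)
    (A : 'M[R]_(m, n)) (q : 'cV[R]_n) : R :=
  let x := A *m q in
  alpha * (dotc x beta - dotc x x) + dotc q gamma - dotc q q.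

Definition is_maximizer (m n : nat)
    (F : 'M[R]_(m, n) -> 'cV[R]_n -> R) (A : 'M[R]_(m, n)) (q : 'cV[R]_n) : Prop :=
  [/\ unit_cols A, nonneg q &
      forall (A' : 'M[R]_(m, n)) (q' : 'cV[R]_n),
        unit_cols A' -> nonneg q' -> F A' q' <= F A q].

Definition firm_profit (m n : nat) (alpha : R) (beta : 'cV[R]_m) (gamma : 'cV[R]_n)
    (A : 'M[R]_(m, n)) (q : 'cV[R]_n) (i : 'I_n) (a : 'cV[R]_m) (qi : R) : R :=
  alpha * qi * dotc a (beta - \sum_(j < n | j != i) q j 0 *: col j A)
  - (1 + alpha) * qi ^+ 2 + gamma i 0 * qi.

Definition is_equilibrium (m n : nat) (alpha : R) (beta : 'cV[R]_m) (gamma : 'cV[R]_n)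
    (A : 'M[R]_(m, n)) (q : 'cV[R]_n) : Prop :=
  [/\ unit_cols A, nonneg q &
      forall (i : 'I_n) (a : 'cV[R]_m) (qi : R),
        norm2sq a = 1 -> 0 <= qi ->
        firm_profit alpha beta gamma A q i a qi
          <= firm_profit alpha beta gamma A q i (col i A) (q i 0)].

Definition sbar (m n : nat) (gamma : 'cV[R]_n) (A : 'M[R]_(m, n)) : R :=
  ('C(n, 2))%:R^-1 *
    \sum_(i < n) \sum_(j < n | (i < j)%N)
       gamma i 0 * gamma j 0 * dotc (col i A) (col j A).

End Defs.

From HB Require Import structures.
From mathcomp Require Import all_boot all_order all_algebra.
From mathcomp Require Import ring lra.
Set Implicit Arguments. Unset Strict Implicit. Unset Printing Implicit Defensive.
Import Order.TTheory GRing.Theory Num.Theory.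
Local Open Scope ring_scope.

(* A maximizer (A, q) of Omega satisfies first-order conditions: every q_i is
   positive (otherwise flipping the unused column a_i would give a second
   maximizer with incompatible stationarity conditions), q_i = gamma_i +
   alpha <a_i, e> for the residual e = beta - A q, and every a_i is a best
   response, which forces e to be parallel to a_i.  If e = 0 then q = gamma and
   A gamma = beta.  Otherwise all columns are +-beta, and r(gamma) <= 1 < R(gamma)
   provide weights c along which rotating the columns slightly out of the line of
   beta (possible since m >= 2) strictly increases Omega.  Doubling q turns
   maximizers of Pi into maximizers of Omega, and the equilibrium satisfies
   A^d gamma = (2 + alpha) beta; the values of sbar then follow from
   sbar_gamma(A) = (|A gamma|^2 - |gamma|^2) / (n (n - 1)) for unit columns. *)

Section InnerProduct.
Variables (R : realFieldType) (k : nat).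
Implicit Types (u v w : 'cV[R]_k) (a : R).

Lemma dotcC u v : dotc u v = dotc v u.
Proof. by apply: eq_bigr => i _; rewrite mulrC. Qed.

Lemma dotcDl u v w : dotc (u + v) w = dotc u w + dotc v w.
Proof. by rewrite /dotc -big_split; apply: eq_bigr => i _; rewrite mxE mulrDl. Qed.

Lemma dotcDr u v w : dotc w (u + v) = dotc w u + dotc w v.
Proof. by rewrite dotcC dotcDl !(dotcC w). Qed.

Lemma dotcZl a u w : dotc (a *: u) w = a * dotc u w.
Proof. by rewrite /dotc mulr_sumr; apply: eq_bigr => i _; rewrite mxE mulrA. Qed.

Lemma dotcZr a u w : dotc w (a *: u) = a * dotc w u.
Proof. by rewrite dotcC dotcZl dotcC. Qed.

Lemma dotcNl u w : dotc (- u) w = - dotc u w.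
Proof. by rewrite -scaleN1r dotcZl mulN1r. Qed.

Lemma dotcNr u w : dotc w (- u) = - dotc w u.
Proof. by rewrite dotcC dotcNl dotcC. Qed.

Lemma dotcBl u v w : dotc (u - v) w = dotc u w - dotc v w.
Proof. by rewrite dotcDl dotcNl. Qed.

Lemma dotcBr u v w : dotc w (u - v) = dotc w u - dotc w v.
Proof. by rewrite dotcDr dotcNr. Qed.

Lemma dotc0l w : dotc 0 w = 0.
Proof. by rewrite /dotc big1 // => i _; rewrite mxE mul0r. Qed.

Lemma dotc0r w : dotc w 0 = 0.
Proof. by rewrite dotcC dotc0l. Qed.

Lemma dotc_suml I (r : seq I) (P : pred I) (F : I -> 'cV[R]_k) w :
  dotc (\sum_(i <- r | P i) F i) w = \sum_(i <- r | P i) dotc (F i) w.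
Proof. by elim/big_rec2: _ => [|i y1 y2 _ <-]; rewrite ?dotc0l ?dotcDl. Qed.

Lemma dotc_delta (i : 'I_k) v : dotc (delta_mx i 0) v = v i 0.
Proof.
rewrite /dotc (bigD1 i) //= big1 ?addr0 => [|j /negbTE ji]; rewrite mxE ?ji ?mul0r //.
by rewrite !eqxx mul1r.
Qed.

Lemma dotc_ge0 u : 0 <= dotc u u.
Proof. by apply: sumr_ge0 => i _; rewrite -expr2 sqr_ge0. Qed.

Lemma dotc_eq0 u : (dotc u u == 0) = (u == 0).
Proof.
apply/idP/eqP => [/eqP uu0|->]; last by rewrite dotc0l.
apply/matrixP => i j; rewrite (ord1 j) mxE.
have sq_ge0 (l : 'I_k) : true -> 0 <= u l 0 * u l 0 by rewrite -expr2 sqr_ge0.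
by have /eqP := @psumr_eq0P _ _ _ _ sq_ge0 uu0 i isT; rewrite mulf_eq0 orbb => /eqP.
Qed.

Lemma dotc_gt0 u : (0 < dotc u u) = (u != 0).
Proof. by rewrite lt_def dotc_ge0 andbT dotc_eq0. Qed.

End InnerProduct.

Section Columns.
Variables (R : realFieldType) (m n : nat).
Implicit Types (A : 'M[R]_(m, n)) (q : 'cV[R]_n) (a : 'cV[R]_m).

Lemma mulmx_sum_col A q : A *m q = \sum_(j < n) q j 0 *: col j A.
Proof.
apply/matrixP => i z; rewrite (ord1 z) !mxE summxE.
by apply: eq_bigr => j _; rewrite !mxE mulrC.
Qed.

Lemma col_matrix (F : 'I_n -> 'cV[R]_m) j : col j (\matrix_(r, l) F l r 0) = F j.
Proof. by apply/matrixP => r s; rewrite (ord1 s) !mxE. Qed.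

Definition set_col A i a := \matrix_(r, l) (if l == i then a else col l A) r 0.

Lemma col_set_col A i a l : col l (set_col A i a) = if l == i then a else col l A.
Proof. exact: col_matrix. Qed.

Lemma mulmx_set_col A i a q : set_col A i a *m q = A *m q + q i 0 *: (a - col i A).
Proof.
rewrite !mulmx_sum_col (bigD1 i) //= [in RHS](bigD1 i) //= col_set_col eqxx.
rewrite (eq_bigr (fun l => q l 0 *: col l A)) => [|l /negbTE li]; last first.
  by rewrite col_set_col li.
by rewrite scalerBr [RHS]addrC addrA subrK.
Qed.

Lemma unit_cols_set_col A i a :
  unit_cols A -> norm2sq a = 1 -> unit_cols (set_col A i a).
Proof. by move=> hA ha l; rewrite col_set_col; case: (l == i). Qed.

End Columns.

Section Geometry.
Variable R : realFieldType.

Lemma exists_orthogonal m (beta : 'cV[R]_m) :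
  (1 < m)%N -> beta != 0 -> exists2 z : 'cV[R]_m, dotc z beta = 0 & z != 0.
Proof.
move=> m1 nz; have /existsP [k bk] : [exists k, beta k 0 != 0].
  apply: contraR nz => /existsPn b0; apply/eqP/matrixP => i j.
  by rewrite (ord1 j) mxE; apply/eqP/negPn/b0.
pose o0 := Ordinal (ltnW m1); pose o1 := Ordinal m1.
pose l := if k == o0 then o1 else o0.
have lk : l != k.
  rewrite /l; case: (eqVneq k o0) => [->|ko]; last by rewrite eq_sym.
  by apply/eqP => /(congr1 val).
exists (beta l 0 *: delta_mx k 0 - beta k 0 *: delta_mx l 0).
  by rewrite dotcBl !dotcZl !dotc_delta mulrC subrr.
apply: contraNneq bk => /matrixP/(_ l 0); rewrite !mxE (negbTE lk) !eqxx /=.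
by rewrite mulr0 mulr1 sub0r => /eqP; rewrite oppr_eq0.
Qed.

Lemma unit_argmax_parallel k (b v : 'cV[R]_k) : norm2sq b = 1 ->
  (forall a, norm2sq a = 1 -> dotc a v <= dotc b v) -> v = dotc b v *: b.
Proof.
rewrite /norm2sq => bb bmax.
(* Reflecting b in the hyperplane orthogonal to w gives another unit vector. *)
have reflect_ge0 w : w != 0 -> 0 <= dotc b w * dotc w v.
  rewrite -dotc_gt0 => ww; set r := 2 * dotc b w / dotc w w.
  have : dotc (b - r *: w) v <= dotc b v.
    apply: bmax; rewrite /norm2sq !(dotcBl, dotcBr, dotcZl, dotcZr) bb (dotcC w b).
    by rewrite /r; field; rewrite gt_eqF.
  rewrite dotcBl dotcZl gerBl => rwv.
  have -> : dotc b w * dotc w v = r * dotc w v * (dotc w w / 2).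
    by rewrite /r; field; rewrite gt_eqF.
  by rewrite mulr_ge0 // divr_ge0 // ltW.
set u := v - dotc b v *: b.
have bu : dotc b u = 0 by rewrite /u dotcBr dotcZr bb mulr1 subrr.
have uv : dotc u v = dotc u u.
  by rewrite [in RHS]/u dotcBr dotcZr (dotcC u b) bu mulr0 subr0.
apply/eqP; rewrite -subr_eq0 -/u -dotc_eq0 eq_le dotc_ge0 andbT leNgt.
apply/negP => uu; pose s := - (dotc b v + 1) / dotc u u.
have bw : dotc b (b + s *: u) = 1 by rewrite dotcDr dotcZr bu mulr0 addr0.
have : 0 <= dotc b (b + s *: u) * dotc (b + s *: u) v.
  by apply: reflect_ge0; apply: contra_eq_neq bw => ->; rewrite dotc0r eq_sym oner_neq0.
rewrite bw mul1r dotcDl dotcZl uv /s divfK ?gt_eqF //; lra.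
Qed.

End Geometry.

Lemma scalar_first_order (R : realFieldType) (k q D : R) : 0 < k -> 0 <= q ->
  (forall s, - q <= s -> s * D <= k * s ^+ 2) -> D <= 0 /\ (0 < q -> D = 0).
Proof.
move=> k0 q0 hs.
have gain s : - q <= s -> 0 < s * (D - k * s) -> False.
  by move=> /hs; rewrite mulrBr expr2 mulrCA; lra.
have ks : k * (D / (2 * k)) = D / 2 by field; rewrite gt_eqF.
have Dle : D <= 0.
  rewrite leNgt; apply/negP => D0; apply: (gain (D / (2 * k))).
    by apply: le_trans (ltW (divr_gt0 D0 (mulr_gt0 _ k0))); lra.
  by rewrite ks mulr_gt0 ?divr_gt0 ?mulr_gt0 //; lra.
split=> // qpos; apply/eqP; rewrite eq_le Dle leNgt; apply/negP => Dneg.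
have [qD|Dq] := lerP q (- D / (2 * k)).
  apply: (gain (- q) (lexx _)); rewrite -mulrNN opprK mulr_gt0 //.
  move: qD; rewrite ler_pdivlMr ?mulr_gt0 //; lra.
apply: (gain (D / (2 * k))); first by move: Dq; rewrite mulNr ltrNl => /ltW.
rewrite ks -mulrNN mulr_gt0 // oppr_gt0 ?pmulr_llt0 ?invr_gt0 ?mulr_gt0 //; lra.
Qed.

Section OmegaFirstOrder.
Variables (R : realFieldType) (m n : nat) (alpha : R).
Variables (beta : 'cV[R]_m) (gamma : 'cV[R]_n).
Hypothesis alpha_gt0 : 0 < alpha.
Implicit Types (A : 'M[R]_(m, n)) (q : 'cV[R]_n).

Definition surplus (x : 'cV[R]_m) := dotc x beta - 2^-1 * dotc x x.

Lemma OmegaE A q :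
  Omega alpha beta gamma A q = alpha * surplus (A *m q) + dotc q gamma - 2^-1 * dotc q q.
Proof. by []. Qed.

Lemma surplusD x h s : surplus (x + s *: h)
  = surplus x + s * dotc h (beta - x) - 2^-1 * s ^+ 2 * dotc h h.
Proof. by rewrite /surplus !(dotcDl, dotcDr, dotcZl, dotcZr, dotcNr) (dotcC x h); field. Qed.

(* the partial derivative of Omega in q_i *)
Definition dOmega A q i := alpha * dotc (col i A) (beta - A *m q) + gamma i 0 - q i 0.

Lemma Omega_shift_q A q i s : norm2sq (col i A) = 1 ->
  Omega alpha beta gamma A (q + s *: delta_mx i 0)
  = Omega alpha beta gamma A q + s * dOmega A q i - 2^-1 * (1 + alpha) * s ^+ 2.
Proof.
rewrite /norm2sq => ai; rewrite !OmegaE mulmxDr -scalemxAr -colE surplusD ai.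
rewrite !(dotcDl, dotcDr, dotcZl, dotcZr) (dotcC q (delta_mx i 0)).
by rewrite !dotc_delta mxE !eqxx /= /dOmega dotcDr; field.
Qed.

Lemma maximizer_stationary A q i : is_maximizer (Omega alpha beta gamma) A q ->
  dOmega A q i <= 0 /\ (0 < q i 0 -> dOmega A q i = 0).
Proof.
move=> [hA hq hmax]; apply: (@scalar_first_order _ (2^-1 * (1 + alpha))) => //.
  by rewrite mulr_gt0 ?invr_gt0 ?addr_gt0.
move=> s sq; have := hmax A (q + s *: delta_mx i 0) hA.
rewrite Omega_shift_q // -addrA gerDl subr_le0; apply.
move=> j; rewrite !mxE; case: (eqVneq j i) => [->|ji]; first by rewrite !eqxx mulr1; lra.
by rewrite /= mulr0 addr0.
Qed.

Lemma maximizer_q_gt0 A q i : (forall j, 0 < gamma j 0) ->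
  is_maximizer (Omega alpha beta gamma) A q -> 0 < q i 0.
Proof.
move=> gamma_gt0 hmx; have [hA hq hmax] := hmx.
rewrite lt_def hq andbT; apply/eqP => qi0.
(* flipping the unused direction a_i to -a_i keeps Aq, hence a maximizer *)
pose A' := set_col A i (- col i A).
have AqE : A' *m q = A *m q by rewrite mulmx_set_col qi0 scale0r addr0.
have hmx' : is_maximizer (Omega alpha beta gamma) A' q.
  split=> //; last by move=> B p hB hp; rewrite [leRHS]OmegaE AqE -OmegaE; exact: hmax.
  by apply: unit_cols_set_col => //; rewrite /norm2sq dotcNl dotcNr opprK; apply: hA.
have [+ _] := maximizer_stationary i hmx; have [+ _] := maximizer_stationary i hmx'.
rewrite /dOmega AqE col_set_col eqxx dotcNl qi0; have := gamma_gt0 i; lra.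
Qed.

Lemma maximizer_col_best A q i : is_maximizer (Omega alpha beta gamma) A q ->
  0 < q i 0 -> forall a, norm2sq a = 1 ->
  dotc a (beta - A *m q + q i 0 *: col i A)
    <= dotc (col i A) (beta - A *m q + q i 0 *: col i A).
Proof.
move=> [hA hq hmax] qi a ha.
have := hmax (set_col A i a) q (unit_cols_set_col i hA ha) hq.
rewrite !OmegaE lerD2r lerD2r ler_pM2l // mulmx_set_col surplusD -addrA gerDl.
have ai : dotc (col i A) (col i A) = 1 by exact: hA i.
move: ha; rewrite /norm2sq => ha.
rewrite !(dotcBl, dotcBr, dotcDr, dotcZr) ha ai (dotcC (col i A) a); nra.
Qed.

Lemma maximizer_residual_parallel A q i : is_maximizer (Omega alpha beta gamma) A q ->
  0 < q i 0 -> beta - A *m q = dotc (col i A) (beta - A *m q) *: col i A.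
Proof.
move=> hmx qi; have [hA _ _] := hmx.
have ai : dotc (col i A) (col i A) = 1 by exact: hA i.
have := unit_argmax_parallel (hA i) (maximizer_col_best hmx qi).
by rewrite dotcDr dotcZr ai mulr1 scalerDl => /addIr.
Qed.

End OmegaFirstOrder.

Section CollinearDescent.
Variables (R : realFieldType) (n : nat).
Implicit Types (w c eps : 'I_n -> R) (d : R).

(* For columns a_j = eps_j beta and weights w_j = q_j eps_j, rotating a_j by the
   small angle c_j t changes Omega by a negative multiple of
   t^2 * descent_form w (1 - sum w) c, up to higher order terms. *)
Definition descent_form w d c := d * (\sum_l w l * c l ^+ 2) + (\sum_l w l * c l) ^+ 2.

Lemma descent_two w d i j : i != j -> d * w i < 0 -> d * w j < 0 ->
  exists c, descent_form w d c < 0.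
Proof.
move=> ij di dj; pose c l := if l == i then w j else if l == j then - w i else 0.
have sum2 (F : 'I_n -> R -> R) : (forall l, c l = 0 -> F l (c l) = 0) ->
    \sum_l F l (c l) = F i (w j) + F j (- w i).
  move=> F0; rewrite (bigD1 i) //= (bigD1 j) 1?eq_sym //= big1 => [|l /andP[li lj]].
    by rewrite addr0 /c eqxx eq_sym (negbTE ij) eqxx.
  by apply: F0; rewrite /c (negbTE li) (negbTE lj).
exists c; rewrite /descent_form.
rewrite (sum2 (fun l x => w l * x ^+ 2)) => [|l ->]; last by rewrite expr0n mulr0.
rewrite (sum2 (fun l x => w l * x)) => [|l ->]; last by rewrite mulr0.
have wij : 0 < w i * w j by nra.
have -> : d * (w i * w j ^+ 2 + w j * (- w i) ^+ 2) + (w i * w j + w j * - w i) ^+ 2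
  = w i * w j * (d * w i + d * w j) by ring.
by rewrite pmulr_rlt0 //; lra.
Qed.

Lemma descent_one w d k : d = 1 - \sum_l w l -> w k < 1 -> d * w k < 0 ->
  exists c, descent_form w d c < 0.
Proof.
move=> hd wk1 dwk; pose kap := - w k / (1 - w k).
pose c l := if l == k then 1 else kap.
have sum_k (f : R -> R) :
    \sum_l w l * f (c l) = w k * f 1 + (\sum_(l | l != k) w l) * f kap.
  rewrite (bigD1 k) //= mulr_suml /c eqxx; congr (_ + _).
  by apply: eq_bigr => l /negbTE ->.
have rest : \sum_(l | l != k) w l = 1 - d - w k by move: hd; rewrite (bigD1 k) //=; lra.
exists c; rewrite /descent_form (sum_k (fun x => x ^+ 2)) (sum_k id) rest /=.
(* kap minimizes the form along this line, where it equals d w_k / (1 - w_k) *)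
have -> : d * (w k * 1 ^+ 2 + (1 - d - w k) * kap ^+ 2) + (w k * 1 + (1 - d - w k) * kap) ^+ 2
  = d * w k / (1 - w k) by rewrite /kap; field; lra.
by rewrite ltr_pdivrMr ?mul0r //; lra.
Qed.

End CollinearDescent.

Section CollinearSigns.
Variables (R : realFieldType) (n : nat) (gamma : 'cV[R]_n) (eps : 'I_n -> R).
Hypotheses (gamma_gt0 : forall j, 0 < gamma j 0) (eps_sign : forall j, eps j ^+ 2 = 1).

Lemma sign_neq1 j : eps j != 1 -> eps j = -1.
Proof. by move=> e1; have /eqP := eps_sign j; rewrite sqrf_eq1 (negbTE e1) => /eqP. Qed.

Lemma Rg_sum : Rg gamma = \sum_j gamma j 0.
Proof. by apply: eq_bigr => j _; rewrite ger0_norm ?ltW. Qed.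

Lemma sum_signed_le_rg : (forall i j, eps i = 1 -> eps j = 1 -> i = j) ->
  \sum_j gamma j 0 * eps j <= rg gamma.
Proof.
move=> uniq1; rewrite /rg -/(Rg gamma) Rg_sum.
have ninf_ge0 : 0 <= norminf gamma by apply: bigmax_ge_id.
case: (pickP (fun k => eps k == 1)) => [k /eqP ek|none]; last first.
  rewrite (eq_bigr (fun j => - gamma j 0)) ?sumrN => [|j _]; first lra.
  by rewrite sign_neq1 ?none // mulrN1.
rewrite (bigD1 k) //= [X in _ <= _ - X](bigD1 k) //= ek mulr1.
rewrite (eq_bigr (fun j => - gamma j 0)) ?sumrN => [|j jk]; last first.
  by rewrite sign_neq1 ?mulrN1 //; apply: contra jk => /eqP ej; apply/eqP/uniq1.
have : gamma k 0 <= norminf gamma.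
  by apply: le_trans (le_bigmax _ (fun j => `|gamma j 0|) k); rewrite ler_norm.
lra.
Qed.

Lemma collinear_descent (alpha d : R) (q : 'cV[R]_n) : 0 < alpha ->
  (forall j, 0 < q j 0) -> (forall j, q j 0 = gamma j 0 + alpha * eps j * d) ->
  d = 1 - \sum_j q j 0 * eps j -> d != 0 -> rg gamma <= 1 -> 1 < Rg gamma ->
  exists c, descent_form (fun j => q j 0 * eps j) d c < 0.
Proof.
move=> alpha_gt0 q_gt0 qE hd d_neq0 rg_le1 Rg_gt1.
have npos : 0 < 1 + n%:R * alpha by have := mulr_ge0 (ler0n R n) (ltW alpha_gt0); lra.
have balance : d * (1 + n%:R * alpha) = 1 - \sum_j gamma j 0 * eps j.
  have : \sum_j q j 0 * eps j = \sum_j gamma j 0 * eps j + n%:R * alpha * d.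
    rewrite (eq_bigr (fun j => gamma j 0 * eps j + alpha * d)) => [|j _].
      by rewrite big_split /= sumr_const card_ord -mulrA mulr_natl.
    rewrite qE -(mulr1 (alpha * d)) -(eps_sign j); ring.
  lra.
case: (ltgtP d 0) => [dneg|dpos|d0]; last by rewrite d0 eqxx in d_neq0.
  case: (pickP (fun p : 'I_n * 'I_n => [&& p.1 != p.2, eps p.1 == 1 & eps p.2 == 1])).
    move=> [i j] /and3P[/= ij /eqP ei /eqP ej].
    by apply: (descent_two ij); rewrite ?ei ?ej mulr1 pmulr_llt0.
  move=> none; have S_le : \sum_j gamma j 0 * eps j <= rg gamma.
    apply: sum_signed_le_rg => i j ei ej; apply/eqP; apply: contraFT (none (i, j)).
    by rewrite /= ei ej !eqxx !andbT.
  have : d * (1 + n%:R * alpha) < 0 by rewrite pmulr_llt0.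
  lra.
case: (pickP (fun k => eps k == -1)) => [k /eqP ek|none].
  apply: (descent_one (k := k)); rewrite ?ek ?mulrN1 //; first by have := q_gt0 k; lra.
  by rewrite mulrN oppr_lt0 mulr_gt0.
have S_eq : \sum_j gamma j 0 * eps j = Rg gamma.
  rewrite Rg_sum; apply: eq_bigr => j _.
  case: (eqVneq (eps j) 1) => [->|/sign_neq1 e]; first by rewrite mulr1.
  by have := none j; rewrite e eqxx.
have : 0 < d * (1 + n%:R * alpha) by rewrite mulr_gt0.
lra.
Qed.

End CollinearSigns.

Section RotationGain.
Variables (R : realFieldType) (n : nat) (w c : 'I_n -> R) (d : R).

Definition tilted_sum (M : R) (f : 'I_n -> R) := \sum_j w j * f j / (1 + M * c j ^+ 2).

Definition rotation_gain M :=
  let P1 := tilted_sum M (fun j => c j ^+ 2) in let P2 := tilted_sum M c in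
  - d * P1 - M * P1 ^+ 2 - P2 ^+ 2.

Lemma tilt_ge1 M j : 0 <= M -> 1 <= 1 + M * c j ^+ 2.
Proof. by move=> M0; rewrite lerDl mulr_ge0 ?sqr_ge0. Qed.

Lemma tilted_sum_norm M f : 0 <= M -> `|tilted_sum M f| <= \sum_j `|w j * f j|.
Proof.
move=> M0; apply: le_trans (ler_norm_sum _ _ _) _; apply: ler_sum => j _.
have t1 := tilt_ge1 j M0.
rewrite normrM normfV [X in _ / X]ger0_norm ?(le_trans ler01) //.
by rewrite ler_pdivrMr ?(lt_le_trans ltr01) // ler_peMr.
Qed.

Lemma tilted_sumE M f : 0 <= M -> tilted_sum M f
  = \sum_j w j * f j - M * tilted_sum M (fun j => f j * c j ^+ 2).
Proof.
move=> M0; rewrite /tilted_sum mulr_sumr -sumrB; apply: eq_bigr => j _.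
by field; rewrite gt_eqF // (lt_le_trans ltr01) ?tilt_ge1.
Qed.

Lemma rotation_gain_pos : descent_form w d c < 0 ->
  exists2 M0 : R, 0 < M0 & forall M, 0 < M -> M <= M0 -> 0 < rotation_gain M.
Proof.
move=> Psi_lt0; set Psi := descent_form w d c in Psi_lt0.
pose Kn (f : 'I_n -> R) := \sum_j `|w j * f j|.
pose K := `|d| * Kn (fun j => c j ^+ 2 * c j ^+ 2) + Kn (fun j => c j ^+ 2) ^+ 2
          + 2 * Kn c * Kn (fun j => c j * c j ^+ 2).
have Kn_ge0 f : 0 <= Kn f by apply: sumr_ge0.
have K_ge0 : 0 <= K by rewrite !addr_ge0 ?mulr_ge0 ?sqr_ge0.
exists (- Psi / (K + 1)) => [|M M_gt0 M_le]; first by rewrite divr_gt0 //; lra.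
have MK : M * K < - Psi.
  apply: le_lt_trans (_ : - Psi / (K + 1) * K < - Psi).
    by rewrite ler_wpM2r.
  by rewrite mulrAC ltr_pdivrMr; [nra | lra].
rewrite /rotation_gain; set P1 := tilted_sum M _; set P2 := tilted_sum M c.
set Y := tilted_sum M (fun j => c j ^+ 2 * c j ^+ 2).
set X := tilted_sum M (fun j => c j * c j ^+ 2).
have P1E : P1 = \sum_j w j * c j ^+ 2 - M * Y by rewrite /P1 tilted_sumE ?ltW.
have P2E : P2 = \sum_j w j * c j - M * X by rewrite /P2 tilted_sumE ?ltW.
(* the gain is - Psi up to a term of size at most M * K *)
have -> : - d * P1 - M * P1 ^+ 2 - P2 ^+ 2
  = - Psi + M * (d * Y - P1 ^+ 2 + X * (\sum_j w j * c j + P2)).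
  by rewrite /Psi /descent_form P1E P2E; ring.
have M_ge0 := ltW M_gt0.
have dY : `|d * Y| <= `|d| * Kn (fun j => c j ^+ 2 * c j ^+ 2).
  by rewrite normrM ler_wpM2l ?tilted_sum_norm.
have P1sq : `|P1| <= Kn (fun j => c j ^+ 2) by exact: tilted_sum_norm.
have XB : `|X * (\sum_j w j * c j + P2)| <= Kn (fun j => c j * c j ^+ 2) * (2 * Kn c).
  rewrite normrM ler_pM ?tilted_sum_norm // mulr2n mulrDl mul1r.
  by apply: le_trans (ler_normD _ _) (lerD (ler_norm_sum _ _ _) (tilted_sum_norm _ _)).
move: dY P1sq XB; rewrite !ler_norml => /andP[dY _] /andP[P1l P1u] /andP[XB _].
have inner : - K <= d * Y - P1 ^+ 2 + X * (\sum_j w j * c j + P2) by rewrite /K; nra.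
nra.
Qed.

End RotationGain.

Section Rotation.
Variables (R : realFieldType) (m n : nat) (alpha : R).
Variables (beta y : 'cV[R]_m) (gamma : 'cV[R]_n) (eps : 'I_n -> R).
Hypotheses (beta_unit : dotc beta beta = 1) (y_orth : dotc y beta = 0).
Hypothesis eps_sign : forall j, eps j ^+ 2 = 1.

Lemma dotc_plane s t s' t' : dotc (s *: beta + t *: y) (s' *: beta + t' *: y)
  = s * s' + t * t' * dotc y y.
Proof.
rewrite !(dotcDl, dotcDr, dotcZl, dotcZr) beta_unit y_orth (dotcC beta y) y_orth; ring.
Qed.

(* a rational parametrization of the unit circle in the plane spanned by beta and y *)
Definition rotate (u : R) := let t := 1 + dotc y y * u ^+ 2 in
  (1 - 2 * dotc y y * (u ^+ 2 / t)) *: beta + (2 * (u / t)) *: y.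

Lemma rotate_unit u : norm2sq (rotate u) = 1.
Proof.
rewrite /norm2sq dotc_plane; field.
by rewrite gt_eqF // (lt_le_trans ltr01) // lerDl mulr_ge0 ?dotc_ge0 ?sqr_ge0.
Qed.

Definition rotate_cols (c : 'I_n -> R) : 'M[R]_(m, n) :=
  \matrix_(r, l) (eps l *: rotate (c l)) r 0.

Lemma unit_cols_rotate_cols c : unit_cols (rotate_cols c).
Proof.
move=> j; rewrite /norm2sq col_matrix dotcZl dotcZr mulrA -expr2 eps_sign mul1r.
exact: rotate_unit.
Qed.

Variables (q : 'cV[R]_n) (c : 'I_n -> R).

Let w j := q j 0 * eps j.

Lemma mulmx_rotate_cols : rotate_cols c *m q
  = (\sum_j w j - 2 * dotc y y * tilted_sum w c (dotc y y) (fun j => c j ^+ 2)) *: beta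
    + (2 * tilted_sum w c (dotc y y) c) *: y.
Proof.
rewrite mulmx_sum_col /tilted_sum /rotate_cols /rotate /w.
under eq_bigr do rewrite col_matrix.
move: (dotc y y) => M; rewrite !mulr_sumr -sumrB !scaler_suml -big_split /=.
by apply: eq_bigr => j _; rewrite scalerA scalerDr !scalerA; congr (_ *: _ + _ *: _); ring.
Qed.

Lemma Omega_rotate_cols (A : 'M[R]_(m, n)) : (forall j, col j A = eps j *: beta) ->
  Omega alpha beta gamma (rotate_cols c) q = Omega alpha beta gamma A q
    + 2 * alpha * dotc y y * rotation_gain w c (1 - \sum_j w j) (dotc y y).
Proof.
move=> colA; have AqE : A *m q = (\sum_j w j) *: beta + 0 *: y.
  rewrite scale0r addr0 mulmx_sum_col scaler_suml.
  by apply: eq_bigr => j _; rewrite colA scalerA.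
have surplus_plane s t : surplus beta (s *: beta + t *: y) = s - 2^-1 * (s ^+ 2 + t ^+ 2 * dotc y y).
  by rewrite /surplus dotc_plane -{2}(addr0 beta) -(scale0r y) -{2}(scale1r beta) dotc_plane; ring.
by rewrite !OmegaE mulmx_rotate_cols AqE !surplus_plane /rotation_gain; field.
Qed.

End Rotation.

Lemma collinear_not_maximizer (R : realFieldType) (m n : nat) (alpha : R)
    (beta : 'cV[R]_m) (gamma : 'cV[R]_n) (A : 'M[R]_(m, n)) (q : 'cV[R]_n)
    (eps c : 'I_n -> R) :
  (1 < m)%N -> 0 < alpha -> dotc beta beta = 1 -> (forall j, eps j ^+ 2 = 1) ->
  (forall j, col j A = eps j *: beta) ->
  descent_form (fun j => q j 0 * eps j) (1 - \sum_j q j 0 * eps j) c < 0 ->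
  ~ is_maximizer (Omega alpha beta gamma) A q.
Proof.
move=> m1 alpha_gt0 beta_unit eps_sign colA Psi_lt0 [_ hq hmax].
have beta_nz : beta != 0 by apply: contra_eq_neq beta_unit => ->; rewrite dotc0l eq_sym oner_neq0.
have [z z_orth z_nz] := exists_orthogonal m1 beta_nz; rewrite -dotc_gt0 in z_nz.
have [M0 M0_gt0 gain_gt0] := rotation_gain_pos Psi_lt0.
pose l := M0 / (dotc z z + M0); pose y := l *: z.
have l_gt0 : 0 < l by rewrite divr_gt0 ?addr_gt0.
have yy : dotc y y = l * (l * dotc z z) by rewrite /y dotcZl dotcZr.
have y_small : dotc y y <= M0.
  have l_lt1 : l < 1 by rewrite /l ltr_pdivrMr ?addr_gt0 // mul1r ltrDr.
  have lz : l * dotc z z <= M0.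
    by rewrite /l mulrAC ler_pdivrMr ?addr_gt0 // ler_pM2l // lerDl ltW.
  by rewrite yy; nra.
have y_gt0 : 0 < dotc y y by rewrite yy; do 2 apply: mulr_gt0 => //.
have y_orth : dotc y beta = 0 by rewrite /y dotcZl z_orth mulr0.
have := hmax _ q (unit_cols_rotate_cols beta_unit y_orth eps_sign c) hq.
rewrite (Omega_rotate_cols alpha gamma beta_unit y_orth q c colA) gerDl leNgt.
by rewrite !mulr_gt0 ?gain_gt0.
Qed.

Lemma residual_collinear (R : realFieldType) (m n : nat) (beta e : 'cV[R]_m)
    (A : 'M[R]_(m, n)) (q : 'cV[R]_n) (mu : 'I_n -> R) :
  unit_cols A -> dotc beta beta = 1 -> beta = A *m q + e -> e != 0 ->
  (forall i, e = mu i *: col i A) ->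
  exists2 eps : 'I_n -> R, forall i, eps i ^+ 2 = 1 & forall i, col i A = eps i *: beta.
Proof.
move=> hA beta_unit betaE e_nz he.
have mu_nz i : mu i != 0 by apply: contraNneq e_nz => mu0; rewrite (he i) mu0 scale0r.
have colE i : col i A = (mu i)^-1 *: e by rewrite (he i) scalerA mulVf ?scale1r.
pose lam := \sum_j q j 0 / mu j + 1.
have betaE' : beta = lam *: e.
  rewrite betaE mulmx_sum_col scalerDl scale1r scaler_suml; congr (_ + _).
  by apply: eq_bigr => j _; rewrite colE scalerA.
have lam_nz : lam != 0.
  by apply: contra_eq_neq beta_unit; rewrite betaE' => ->; rewrite scale0r dotc0l eq_sym oner_neq0.
have colE' i : col i A = (mu i * lam)^-1 *: beta.
  by rewrite betaE' scalerA invfM -mulrA mulVf ?mulr1 // colE.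
exists (fun i => (mu i * lam)^-1) => // i.
by have := hA i; rewrite /norm2sq colE' dotcZl dotcZr beta_unit mulr1 -expr2.
Qed.

Theorem maximizer_Omega_opt (R : realFieldType) (m n : nat) (alpha : R)
    (beta : 'cV[R]_m) (gamma : 'cV[R]_n) (A : 'M[R]_(m, n)) (q : 'cV[R]_n) :
  (1 < m)%N -> 0 < alpha -> norm2sq beta = 1 -> (forall i, 0 < gamma i 0) ->
  rg gamma <= 1 -> 1 < Rg gamma ->
  is_maximizer (Omega alpha beta gamma) A q -> q = gamma /\ A *m q = beta.
Proof.
rewrite /norm2sq => m1 alpha_gt0 beta_unit gamma_gt0 rg_le1 Rg_gt1 hmx.
have [hA _ _] := hmx.
have q_gt0 i : 0 < q i 0 := maximizer_q_gt0 alpha_gt0 i gamma_gt0 hmx.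
set e := beta - A *m q; pose mu i := dotc (col i A) e.
have he i : e = mu i *: col i A := maximizer_residual_parallel alpha_gt0 hmx (q_gt0 i).
have qE i : q i 0 = gamma i 0 + alpha * mu i.
  have [_ /(_ (q_gt0 i))] := maximizer_stationary alpha_gt0 i hmx.
  by rewrite /dOmega -/e -/(mu i); lra.
have [e0|e_nz] := eqVneq e 0.
  split; last by apply/eqP; rewrite eq_sym -subr_eq0 -/e e0.
  by apply/matrixP => i j; rewrite (ord1 j) qE /mu e0 dotc0r mulr0 addr0.
have betaE : beta = A *m q + e by rewrite /e addrC subrK.
have [eps eps_sign colA] := residual_collinear hA beta_unit betaE e_nz he.
pose d := 1 - \sum_j q j 0 * eps j.
have eE : e = d *: beta.
  rewrite /e mulmx_sum_col /d scalerBl scale1r scaler_suml; congr (_ - _).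
  by apply: eq_bigr => j _; rewrite colA scalerA.
have d_nz : d != 0 by apply: contraNneq e_nz => d0; rewrite eE d0 scale0r.
have [c Psi_lt0] : exists c, descent_form (fun j => q j 0 * eps j) d c < 0.
  apply: (collinear_descent gamma_gt0 eps_sign alpha_gt0 q_gt0) => // j.
  by rewrite qE /mu eE colA dotcZl dotcZr beta_unit mulr1 mulrA.
by case: (collinear_not_maximizer m1 alpha_gt0 beta_unit eps_sign colA Psi_lt0 hmx).
Qed.

Lemma bin2_double n : ('C(n, 2) * 2 = n * (n - 1))%N.
Proof. by rewrite bin2 muln2 halfK oddM subn1; case: n => //= n; rewrite andNb subn0. Qed.

Lemma sum_sym_triangle (V : nmodType) n (F : 'I_n -> 'I_n -> V) :
  (forall i j, F i j = F j i) ->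
  \sum_i \sum_j F i j = \sum_i F i i + (\sum_(i < n) \sum_(j < n | (i < j)%N) F i j) *+ 2.
Proof.
move=> Fsym.
have row i : \sum_j F i j
    = F i i + (\sum_(j < n | (i < j)%N) F i j + \sum_(j < n | (j < i)%N) F i j).
  rewrite (bigD1 i) //= (bigID (fun j : 'I_n => (i < j)%N) (fun j => j != i)) /=.
  congr (_ + (_ + _)); apply: eq_bigl => j.
    by apply: andb_idl => ij; apply: contraTneq ij => ->; rewrite ltnn.
  by rewrite -leqNgt ltn_neqAle.
have lower : \sum_(i < n) \sum_(j < n | (j < i)%N) F i j
    = \sum_(i < n) \sum_(j < n | (i < j)%N) F i j.
  under eq_bigr do rewrite big_mkcond; rewrite exchange_big /=.
  by apply: eq_bigr => i _; rewrite [RHS]big_mkcond; apply: eq_bigr => j _; rewrite Fsym.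
by rewrite (eq_bigr _ (fun i _ => row i)) !big_split /= lower mulr2n addrA.
Qed.

Lemma sbarE (R : realFieldType) (m n : nat) (gamma : 'cV[R]_n) (A : 'M[R]_(m, n)) :
  (1 < n)%N -> unit_cols A ->
  sbar gamma A = (norm2sq (A *m gamma) - norm2sq gamma) / (n * (n - 1))%:R.
Proof.
move=> n1 hA; rewrite /sbar /norm2sq.
have -> : dotc (A *m gamma) (A *m gamma) = \sum_i \sum_j
    gamma i 0 * gamma j 0 * dotc (col i A) (col j A).
  rewrite mulmx_sum_col dotc_suml; apply: eq_bigr => i _.
  rewrite dotcC dotc_suml; apply: eq_bigr => j _.
  by rewrite dotcZl dotcZr (dotcC (col j A)); ring.
rewrite (@sum_sym_triangle _ _ (fun i j => gamma i 0 * gamma j 0 * dotc (col i A) (col j A)));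
  last by move=> i j; rewrite dotcC [gamma i 0 * _]mulrC.
have -> : \sum_i gamma i 0 * gamma i 0 * dotc (col i A) (col i A) = dotc gamma gamma.
  by apply: eq_bigr => i _; rewrite [dotc _ _]hA mulr1.
have C2 : ('C(n, 2))%:R * 2 = (n * (n - 1))%:R :> R by rewrite -natrM bin2_double.
have C_nz : ('C(n, 2))%:R != 0 :> R by rewrite pnatr_eq0 -lt0n bin_gt0.
by rewrite -C2 addrC addKr; field.
Qed.

Lemma PiE (R : realFieldType) (m n : nat) (alpha : R) (beta : 'cV[R]_m)
    (gamma : 'cV[R]_n) (A : 'M[R]_(m, n)) (q : 'cV[R]_n) :
  Pi alpha beta gamma A q = 2^-1 * Omega alpha beta gamma A (2 *: q).
Proof. by rewrite /Pi /Omega -scalemxAr !(dotcZl, dotcZr); field. Qed.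

Lemma maximizer_Pi_Omega (R : realFieldType) (m n : nat) (alpha : R)
    (beta : 'cV[R]_m) (gamma : 'cV[R]_n) (A : 'M[R]_(m, n)) (q : 'cV[R]_n) :
  is_maximizer (Pi alpha beta gamma) A q ->
  is_maximizer (Omega alpha beta gamma) A (2 *: q).
Proof.
move=> [hA hq hmax]; split=> [//|j|A' q' hA' hq']; first by rewrite mxE mulr_ge0.
have hq'2 : nonneg (2^-1 *: q') by move=> j; rewrite mxE mulr_ge0 ?invr_ge0.
have := hmax A' _ hA' hq'2.
by rewrite !PiE scalerA mulfV ?scale1r ?pnatr_eq0 // ler_pM2l ?invr_gt0.
Qed.

Theorem corollary1 (R : realFieldType) (m n : nat) (alpha : R)
    (beta : 'cV[R]_m) (gamma : 'cV[R]_n)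
    (A1 : 'M[R]_(m, n)) (q1 : 'cV[R]_n)
    (A2 : 'M[R]_(m, n)) (q2 : 'cV[R]_n)
    (Ad : 'M[R]_(m, n)) (qd : 'cV[R]_n) :
  (2 <= n)%N -> (2 <= m)%N -> 0 < alpha -> norm2sq beta = 1 ->
  (forall i : 'I_n, 0 < gamma i 0) ->
  rg gamma <= 1 -> 1 < 2 + alpha -> 2 + alpha <= Rg gamma ->
  is_maximizer (Omega alpha beta gamma) A1 q1 ->
  is_maximizer (Pi alpha beta gamma) A2 q2 ->
  is_equilibrium alpha beta gamma Ad qd ->
  Ad *m qd = beta -> qd = (2 + alpha)^-1 *: gamma ->
  [/\ sbar gamma A1 = sbar gamma A2,
      sbar gamma A2 = (1 - norm2sq gamma) / (n * (n - 1))%:R,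
      (1 - norm2sq gamma) / (n * (n - 1))%:R
        < ((2 + alpha) ^+ 2 - norm2sq gamma) / (n * (n - 1))%:R &
      ((2 + alpha) ^+ 2 - norm2sq gamma) / (n * (n - 1))%:R = sbar gamma Ad].
Proof.
move=> n2 m2 alpha_gt0 beta_unit gamma_gt0 rg_le1 _ Rg_ge hmx1 hmx2 [hAd _ _] Adqd qdE.
have Rg_gt1 : 1 < Rg gamma by lra.
have opt := maximizer_Omega_opt m2 alpha_gt0 beta_unit gamma_gt0 rg_le1 Rg_gt1.
have [q1E A1q] := opt _ _ hmx1; rewrite q1E in A1q.
have [q2E A2q] := opt _ _ (maximizer_Pi_Omega hmx2); rewrite q2E in A2q.
have Adg : Ad *m gamma = (2 + alpha) *: beta.
  by rewrite -Adqd qdE -scalemxAr scalerA mulfV ?scale1r // gt_eqF //; lra.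
have [hA1 _ _] := hmx1; have [hA2 _ _] := hmx2.
rewrite !sbarE // A1q A2q Adg beta_unit /norm2sq dotcZl dotcZr [dotc beta beta]beta_unit mulr1 -expr2.
split=> //; rewrite ltr_pM2r ?ltrD2r ?invr_gt0 ?ltr0n ?muln_gt0 ?subn_gt0 //=.
  by rewrite expr2; nra.
by rewrite n2 andbT ltnW.
Qed.
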